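(* Let $1\le r\le n$ and let $P_1,\dots,P_n$ be independent or PRDS p-values satisfying (i) for every $\alpha>0$ and every $i$, $\sup_{\theta_i\in\Theta_{1i}}\Pr_{\theta_i}(P_i\le\alpha)=1$, and (ii) for every $i$ and every $\theta_i\in\Theta_{1i}$, $\Pr_{\theta_i}(P_i=0)=0$. Let $P_{r/n}=f(P_1,\dots,P_n)$ be a valid monotone p-value for $H_0^{r/n}$. Then there exists a valid GBHPC p-value $P^\star_{r/n}$ that is uniformly at least as powerful as $P_{r/n}$, i.e. $\Pr_\theta(P^\star_{r/n}\le\alpha)\ge\Pr_\theta(P_{r/n}\le\alpha)$ for all $\alpha\in[0,1]$ and all $\theta\in\Theta_1^{r/n}$.
   Context: Component hypotheses $H_{0i}:\theta_i\in\Theta_{0i}$ vs $H_{1i}:\theta_i\in\Theta_{1i}$ ($\Theta_i=\Theta_{0i}\cup\Theta_{1i}$ disjoint), $i=1,\dots,n$; $P_i$ has distribution $\Pr_{\theta_i}$ and is valid: $\sup_{\theta_i\in\Theta_{0i}}\Pr_{\theta_i}(P_i\le\alpha)\le\alpha$. The joint law of $\boldsymbol P$ is $\Pr_\theta$. PRDS means positively regression dependent in the sense of Benjamini and Yekutieli (2001) under every $\theta$; in particular $\Pr_\theta(P_1\le p_1,\dots,P_n\le p_n)\ge\prod_i\Pr_{\theta_i}(P_i\le p_i)$. $H_0^{r/n}$: at most $r-1$ of the $H_{0i}$ are false (null space $\Theta_0^{r/n}$); $\Theta_1^{r/n}$: at least $r$ of the $\theta_i$ lie in $\Theta_{1i}$.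 A combined p-value $f$ is valid for $H_0^{r/n}$ if $\sup_{\theta\in\Theta_0^{r/n}}\Pr_\theta(f(\boldsymbol P)\le\alpha)\le\alpha$ for all $\alpha$, and monotone if non-decreasing in each argument. For $u\subset\{1,\dots,n\}$, $\boldsymbol p_u=(p_j)_{j\in u}$ and $H_{0u}$: $\theta_j\in\Theta_{0j}$ for all $j\in u$. A GBHPC p-value is $f^\star(\boldsymbol p)=\max_{|u|=n-r+1}g_u(\boldsymbol p_u)$, where each $g_u:[0,1]^{n-r+1}\to[0,1]$ is non-decreasing and a valid meta-analysis p-value for $H_{0u}$ (i.e. $\sup_{\theta_u\in\Theta_{0u}}\Pr_{\theta_u}(g_u(\boldsymbol P_u)\le\alpha)\le\alpha$ for all $\alpha$). *)

From HB Require Import structures.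
From mathcomp Require Import all_boot all_order all_algebra.
From mathcomp Require Import all_classical all_reals all_analysis.
Set Implicit Arguments.
Unset Strict Implicit.
Unset Printing Implicit Defensive.
Import Order.TTheory GRing.Theory Num.Theory.
Local Open Scope classical_set_scope.
Local Open Scope ring_scope.

(* Model.  n component hypotheses; component i has parameter space Theta i and
   null part Theta0 i (alternative part = complement).  The vector of p-values is a
   map P : Omega -> n.-tuple R (product Borel sigma-algebra on n.-tuple R),
   and Pr_theta is the probability measure mu theta on Omega. *)

Section Defs.
Variable R : realType.

Definition in01 (x : R) := 0 <= x <= 1.
Definition in01n n (p : n.-tuple R) := forall i : 'I_n, in01 (tnth p i).
Definition tle n (p q : n.-tuple R) := forall i : 'I_n, tnth p i <= tnth q i.

Definition monotone01 n (f : n.-tuple R -> R) :=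
  forall p q, in01n p -> in01n q -> tle p q -> f p <= f q.

Definition pvalue_fun n (f : n.-tuple R -> R) :=
  measurable_fun [set: n.-tuple R] f /\ (forall p, in01n p -> in01 (f p)).

(* g depends only on the coordinates in u, i.e. g(p) = g_u(p_u) *)
Definition depends_only_on n (u : {set 'I_n}) (g : n.-tuple R -> R) :=
  forall p q : n.-tuple R, (forall j, j \in u -> tnth p j = tnth q j) -> g p = g q.
Definition set_depends_only_on n (u : {set 'I_n}) (D : set (n.-tuple R)) :=
  forall p q : n.-tuple R, (forall j, j \in u -> tnth p j = tnth q j) -> (D p <-> D q).

Definition increasing_set n (D : set (n.-tuple R)) :=
  forall p q, tle p q -> D p -> D q.

Variables (d : measure_display) (Omega : measurableType d) (n : nat).
Variable Theta : 'I_n -> Type.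
Variable Theta0 : forall i, set (Theta i).
Variable mu : (forall i, Theta i) -> probability Omega R.
Variable P : Omega -> n.-tuple R.

Definition Pi (i : 'I_n) (w : Omega) : R := tnth (P w) i.

Definition nfalse (theta : forall i, Theta i) : nat :=
  #|[set i : 'I_n | ~~ `[< Theta0 (theta i) >] ]|.

Definition null_rn (r : nat) theta := (nfalse theta <= r.-1)%N.
Definition alt_rn (r : nat) theta := (r <= nfalse theta)%N.

Definition null_u (u : {set 'I_n}) (theta : forall i, Theta i) :=
  forall j, j \in u -> Theta0 (theta j).

Definition valid_for (H : (forall i, Theta i) -> Prop) (g : n.-tuple R -> R) :=
  forall theta, H theta -> forall alpha : R, in01 alpha ->
    (mu theta [set w | (g (P w) <= alpha)%R] <= alpha%:E)%E.

Definition independent_under theta :=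
  forall B : 'I_n -> set R, (forall i, measurable (B i)) ->
    mu theta (\bigcap_(i in [set: 'I_n]) (Pi i @^-1` B i)) =
    (\prod_(i < n) mu theta (Pi i @^-1` B i))%E.

(* PRDS (Benjamini & Yekutieli 2001), on all coordinates: for every
   measurable increasing D and every i, P(P \in D | P_i = x) admits a version
   nondecreasing in x.  A version of the conditional probability is a
   measurable h with P(P \in D, P_i \in B) = E[h(P_i) 1{P_i \in B}]. *)
Definition PRDS_under theta :=
  forall (i : 'I_n) (D : set (n.-tuple R)), measurable D -> increasing_set D ->
    exists h : R -> R,
      [/\ measurable_fun [set: R] h, {homo h : x y / x <= y} &
        forall B : set R, measurable B ->
          mu theta (P @^-1` D `&` Pi i @^-1` B) =
          (\int[mu theta]_(w in Pi i @^-1` B) (h (Pi i w))%:E)%E].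

Definition GBHPC (r : nat) (fstar : n.-tuple R -> R) :=
  exists g : {set 'I_n} -> n.-tuple R -> R,
    (forall u : {set 'I_n}, #|u| = (n - r + 1)%N ->
       [/\ depends_only_on u (g u), pvalue_fun (g u), monotone01 (g u)
         & valid_for (null_u u) (g u)]) /\
    (forall p, in01n p ->
       fstar p = \big[Num.max/0]_(u : {set 'I_n} | #|u| == (n - r + 1)%N) g u p).

End Defs.

From HB Require Import structures.
From mathcomp Require Import all_boot all_order all_algebra.
From mathcomp Require Import all_classical all_reals all_analysis.
From mathcomp Require Import measurable_realfun lra zify.
Import Order.TTheory GRing.Theory Num.Theory.
Import numFieldNormedType.Exports.
Set Implicit Arguments.
Unset Strict Implicit.
Unset Printing Implicit Defensive.
Local Open Scope classical_set_scope.
Local Open Scope ring_scope.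

(* For |u| = n-r+1 let g_u(p) be the limit of f(p_u, d, ..., d) as
   d decreases to 0; it is monotone in d because f is.  For fixed d the
   approximant is valid for H_0u: keep theta_u and move every theta_j, j not in
   u, to an alternative under which P_j <= d with probability close to 1
   (condition (i)).  The new parameter lies in Theta_0^{r/n}, the law of P_u
   does not change, and off the small event {P_j > d for some j not in u} the
   event f(P_u, d, ..., d) <= alpha is contained in f(P) <= alpha.  Validity
   passes to the limit g_u, and then to f* = max_u g_u because under
   H_0^{r/n} some u consists of true nulls.  Finally f* <= f wherever all
   p_j > 0, and {P_j = 0} is a null event for every theta (validity of P_j at
   level 0 for true nulls, condition (ii) otherwise). *)

Section Pad.
Variables (R : realType) (n : nat).
Implicit Types (u : {set 'I_n}) (x c : R) (p q : n.-tuple R).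

Definition clamp01 x : R := Num.max 0 (Num.min x 1).

Lemma clamp01_in01 x : in01 (clamp01 x).
Proof. by rewrite /in01 /clamp01 le_max lexx ge_max ler01 ge_min lexx orbT. Qed.

Lemma clamp01_id x : in01 x -> clamp01 x = x.
Proof. by move=> /andP[x0 x1]; rewrite /clamp01 (min_l x1) (max_r x0). Qed.

Lemma in01_inv_succ (k : nat) : in01 (k.+1%:R^-1 : R).
Proof. by rewrite /in01 invr_ge0 ler0n invf_le1 ?ltr0n // ler1n. Qed.

Definition pad u c p : n.-tuple R :=
  [tuple if i \in u then clamp01 (tnth p i) else c | i < n].

Lemma in01n_pad u c p : in01 c -> in01n (pad u c p).
Proof. by move=> c01 i; rewrite tnth_mktuple; case: ifP => // _; exact: clamp01_in01. Qed.

Lemma tle_pad_const u c (c' : R) p : c <= c' -> tle (pad u c p) (pad u c' p).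
Proof. by move=> cc' i; rewrite !tnth_mktuple; case: ifP. Qed.

Lemma tle_pad u c p q : in01n p -> in01n q -> tle p q -> tle (pad u c p) (pad u c q).
Proof. by move=> p01 q01 pq i; rewrite !tnth_mktuple; case: ifP => // _; rewrite !clamp01_id. Qed.

Lemma tle_self_pad u c p : in01n p -> (forall j, j \notin u -> tnth p j <= c) ->
  tle p (pad u c p).
Proof. by move=> p01 pc i; rewrite tnth_mktuple; case: ifPn => [_|/pc //]; rewrite clamp01_id. Qed.

Lemma tle_pad_self u c p : in01n p -> (forall j, j \notin u -> c <= tnth p j) ->
  tle (pad u c p) p.
Proof. by move=> p01 cp i; rewrite tnth_mktuple; case: ifPn => [_|/cp //]; rewrite clamp01_id. Qed.

Lemma pad_eq u c p q : (forall j, j \in u -> tnth p j = tnth q j) -> pad u c p = pad u c q.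
Proof.
by move=> pq; apply: eq_from_tnth => i; rewrite !tnth_mktuple; case: ifP => // /pq ->.
Qed.

Lemma measurable_pad u c : measurable_fun [set: n.-tuple R] (pad u c).
Proof.
apply/measurable_fun_tnthP => i.
have -> : (tnth (T:=R))^~ i \o pad u c = fun p => if i \in u then clamp01 (tnth p i) else c.
  by apply: funext => p /=; rewrite tnth_mktuple.
case: (i \in u); last exact: measurable_cst.
apply: measurable_maxr; first exact: measurable_cst.
by apply: measurable_minr; [exact: measurable_tnth | exact: measurable_cst].
Qed.

End Pad.

Section PadLimit.
Variables (R : realType) (n : nat) (f : n.-tuple R -> R).
Hypotheses (f_pvalue : pvalue_fun f) (f_mono : monotone01 f).
Implicit Types (u : {set 'I_n}) (p q : n.-tuple R).

Definition padseq u p (k : nat) : R := f (pad u k.+1%:R^-1 p).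

(** The paper's g_u: g_u(p_u) = lim_(delta -> 0+) f(p_u, delta, ..., delta),
    along delta = 1/(k+1).  Clamping in [pad] makes the sequence monotone and
    bounded for every p, not only on [0,1]^n, which measurability needs. *)
Definition gpad u p : R := inf (range (padseq u p)).

Lemma padseq_nonincreasing u p : nonincreasing_seq (padseq u p).
Proof.
move=> k l kl; apply: f_mono; try exact/in01n_pad/in01_inv_succ.
by apply: tle_pad_const; rewrite lef_pV2 ?posrE ?ltr0n // ler_nat ltnS.
Qed.

Lemma padseq_in01 u p k : in01 (padseq u p k).
Proof. exact/f_pvalue.2/in01n_pad/in01_inv_succ. Qed.

Lemma measurable_padseq u k : measurable_fun [set: n.-tuple R] (padseq u ^~ k).
Proof. exact: measurableT_comp f_pvalue.1 (measurable_pad u _). Qed.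

Lemma has_lbound_padseq u p : has_lbound (range (padseq u p)).
Proof. by exists 0 => _ [k _ <-]; case/andP: (padseq_in01 u p k). Qed.

Lemma gpad_le_padseq u p k : gpad u p <= padseq u p k.
Proof. by apply: (ge_inf (has_lbound_padseq u p)); exists k. Qed.

Lemma padseq_cvg u p : padseq u p k @[k --> \oo] --> gpad u p.
Proof. exact: nonincreasing_cvgn (padseq_nonincreasing u p) (has_lbound_padseq u p). Qed.

Lemma gpad_lt u p a : gpad u p < a -> exists k, padseq u p k < a.
Proof.
by move=> /inf_lt[|_ [k _ <-] lta]; [exists (padseq u p 0), 0%N | exists k].
Qed.

Lemma gpad_in01 u p : in01 (gpad u p).
Proof.
apply/andP; split; last by apply: le_trans (gpad_le_padseq u p 0) _; case/andP: (padseq_in01 u p 0).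
apply: lb_le_inf; first by exists (padseq u p 0), 0%N.
by move=> _ [k _ <-]; case/andP: (padseq_in01 u p k).
Qed.

Lemma gpad_monotone u : monotone01 (gpad u).
Proof.
move=> p q p01 q01 pq; apply: lb_le_inf; first by exists (padseq u q 0), 0%N.
move=> _ [k _ <-]; apply: le_trans (gpad_le_padseq u p k) _.
by apply: f_mono; [exact/in01n_pad/in01_inv_succ.. | exact: tle_pad].
Qed.

Lemma gpad_depends u : depends_only_on u (gpad u).
Proof. by move=> p q pq; rewrite /gpad /padseq; under eq_fun do rewrite (pad_eq _ pq). Qed.

Lemma measurable_gpad u : measurable_fun [set: n.-tuple R] (gpad u).
Proof.
apply: (measurable_fun_cvg (h := fun k p => padseq u p k)) => [k|p _].
  exact: measurable_padseq.
exact: padseq_cvg.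
Qed.

Lemma gpad_le_f u p : in01n p -> (forall j, 0 < tnth p j) -> gpad u p <= f p.
Proof.
move=> p01 p_gt0; pose m := \big[Num.min/1]_(j < n) tnth p j.
have m_gt0 : 0 < m.
  by apply: (big_ind (fun x => 0 < x)) => // x y x0 y0; rewrite lt_min x0 y0.
have m_le j : m <= tnth p j by rewrite /m (bigmin_le_cond _ _ (erefl true)).
apply: le_trans (gpad_le_padseq u p (Num.truncn m^-1)) _.
apply: f_mono => //; first exact/in01n_pad/in01_inv_succ.
apply: tle_pad_self => // j _; apply/ltW/(lt_le_trans _ (m_le j)).
by rewrite invf_plt ?posrE ?ltr0n // truncnS_gt.
Qed.

End PadLimit.

Section MeasureBounds.
Context d (T : measurableType d) (R : realType) (m : {measure set T -> \bar R}).

Lemma le_measure_bigsetU (I : Type) (s : seq I) (Q : pred I) (F : I -> set T) :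
  (forall i, Q i -> measurable (F i)) ->
  (m (\big[setU/set0]_(i <- s | Q i) F i) <= \sum_(i <- s | Q i) m (F i))%E.
Proof.
move=> mF; elim: s => [|i s IH]; first by rewrite !big_nil measure0.
rewrite !big_cons; case: ifP => // Qi.
apply: le_trans (measureU2 _ _ _) (leeD _ IH) => //; first exact: mF.
exact: bigsetU_measurable.
Qed.

Lemma le_measure_nondecreasing_bigcup (F : (set T)^nat) (c : \bar R) :
  (forall k, measurable (F k)) -> nondecreasing_seq F ->
  (forall k, m (F k) <= c)%E -> (m (\bigcup_k F k) <= c)%E.
Proof.
move=> mF ndF Fc.
have cvgF := nondecreasing_cvg_mu (mu := m) mF (bigcup_measurable (fun k _ => mF k)) ndF.
rewrite -(cvg_lim _ cvgF) //; apply: lime_le; first by apply/cvg_ex; exists (m (\bigcup_k F k)).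
exact: nearW.
Qed.

End MeasureBounds.

(* Switched off while declaring [marg], whose index must stay explicit. *)
Unset Implicit Arguments.

Section Model.
Variables (R : realType) (d : measure_display) (Omega : measurableType d)
  (n r : nat) (Theta : 'I_n -> Type) (Theta0 : forall i, set (Theta i))
  (mu : (forall i, Theta i) -> probability Omega R)
  (P : Omega -> n.-tuple R)
  (marg : forall i : 'I_n, Theta i -> probability R R)
  (f : n.-tuple R -> R).
Hypotheses (r_range : (1 <= r <= n)%N) (mP : measurable_fun [set: Omega] P)
  (P01 : forall w, in01n (P w))
  (margP : forall theta (i : 'I_n) (A : set R), measurable A ->
     mu theta (Pi P i @^-1` A) = marg i (theta i) A)
  (law_Pu : forall (u : {set 'I_n}) (theta theta' : forall i, Theta i),
     (forall j, j \in u -> theta j = theta' j) ->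
     forall D : set (n.-tuple R), measurable D -> set_depends_only_on u D ->
     mu theta (P @^-1` D) = mu theta' (P @^-1` D))
  (Pi_valid : forall (i : 'I_n) (alpha : R), in01 alpha ->
     (ereal_sup [set marg i t `]-oo, alpha]%classic | t in Theta0 i] <= alpha%:E)%E)
  (alt_near0 : forall (alpha : R), 0 < alpha -> forall i : 'I_n,
     ereal_sup [set marg i t `]-oo, alpha]%classic | t in ~` Theta0 i] = 1%E)
  (alt_no_atom0 : forall (i : 'I_n) (t : Theta i), ~ Theta0 i t -> marg i t [set 0] = 0%E)
  (f_pvalue : pvalue_fun f) (f_mono : monotone01 f)
  (f_valid : valid_for mu P (null_rn Theta0 r) f).
Set Implicit Arguments.

Lemma measurable_le_comp (h : n.-tuple R -> R) (a : R) :
  measurable_fun [set: n.-tuple R] h -> measurable [set w | h (P w) <= a].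
Proof.
move=> mh; rewrite -[X in measurable X]setTI.
exact: measurable_fun_le (measurableT_comp mh mP) (measurable_cst a).
Qed.

Lemma measurable_Pi_preimage j (A : set R) : measurable A -> measurable (Pi P j @^-1` A).
Proof.
move=> mA; rewrite -[X in measurable X]setTI.
exact: (measurableT_comp (measurable_tnth j) mP).
Qed.

Lemma mu_Pi_eq0 theta j : mu theta (Pi P j @^-1` [set 0]) = 0%E.
Proof.
rewrite margP //; have [th0|/alt_no_atom0 //] := pselect (Theta0 j (theta j)).
have valid0 : (ereal_sup [set marg j t `]-oo, 0%R]%classic | t in Theta0 j] <= 0%:E)%E.
  by apply: Pi_valid; rewrite /in01 lexx ler01.
apply/eqP; rewrite -measure_le0; apply: le_trans valid0.
apply: (@le_trans _ _ (marg j (theta j) `]-oo, 0]%classic)).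
  by apply: le_measure; rewrite ?inE // => x /= ->; rewrite in_itv /=.
by apply: ereal_sup_ubound; exists (theta j).
Qed.

Lemma exists_alt_concentrated (c eps : R) : 0 < c -> 0 < eps ->
  exists t : forall i, Theta i, forall i,
    ~ Theta0 i (t i) /\ (marg i (t i) `]c, +oo[%classic < eps%:E)%E.
Proof.
move=> c_gt0 eps_gt0.
have ex_t i : exists t, ~ Theta0 i t /\ (marg i t `]c, +oo[%classic < eps%:E)%E.
  have : ((1 - eps)%:E < ereal_sup [set marg i t `]-oo, c]%classic | t in ~` Theta0 i])%E.
    by rewrite alt_near0 // lte_fin; lra.
  move=> /ereal_sup_gt[_ [t nt <-] ht]; exists t; split => //.
  rewrite -setCitvl probability_setC //.
  move: ht (probability_le1 (marg i t) (measurable_itv `]-oo, c])).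
  by case: (marg i t _) => [x| |] //=; rewrite ?lte_fin ?lee_fin => *; lra.
by exists (fun i => projT1 (cid (ex_t i))) => i; exact: projT2 (cid (ex_t i)).
Qed.

Lemma null_rn_of_null_u (u : {set 'I_n}) theta : #|u| = (n - r + 1)%N ->
  null_u Theta0 u theta -> null_rn Theta0 r theta.
Proof.
move=> card_u theta_u; rewrite /null_rn /nfalse.
apply: (leq_trans (subset_leq_card (_ : _ \subset ~: u))).
  by apply/fintype.subsetP => i; rewrite !inE; apply: contra => iu; exact/asboolP/theta_u.
by have := cardsC u; rewrite card_ord card_u; lia.
Qed.

Lemma exists_null_u_of_null_rn theta : null_rn Theta0 r theta ->
  exists2 u : {set 'I_n}, #|u| = (n - r + 1)%N & null_u Theta0 u theta.
Proof.
pose T := [set i | `[< Theta0 i (theta i) >]]%SET.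
move=> theta_null; have card_T : (n - r + 1 <= #|T|)%N.
  have := cardsC T; rewrite card_ord.
  have -> : #|~: T| = nfalse Theta0 theta.
    by rewrite /nfalse; apply: eq_card => i; rewrite !inE; apply/idP/idP; rewrite in_setE.
  by move: theta_null r_range; rewrite /null_rn; lia.
exists [set i in take (n - r + 1) (enum T)].
  rewrite cardsE (card_uniqP (take_uniq _ (enum_uniq _))) size_takel //.
  by rewrite -cardE.
by move=> j; rewrite inE => /mem_take; rewrite mem_enum inE => /asboolP.
Qed.

Lemma mu_padseq_le theta (u : {set 'I_n}) k (a : R) : null_rn Theta0 r theta -> in01 a ->
  (mu theta [set w | (padseq f u (P w) k <= a)%R] <=
   a%:E + \sum_(j < n | j \notin u) mu theta (Pi P j @^-1` `]k.+1%:R^-1%R, +oo[%classic))%E.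
Proof.
move=> theta_null a01; set c : R := k.+1%:R^-1.
pose E j := Pi P j @^-1` `]c, +oo[%classic.
have mE j : measurable (E j) by exact: measurable_Pi_preimage.
have sub : [set w | padseq f u (P w) k <= a] `<=`
           [set w | f (P w) <= a] `|` \big[setU/set0]_(j < n | j \notin u) E j.
  move=> w /= fw; have [le_c|] := pselect (forall j, j \notin u -> tnth (P w) j <= c).
    left; apply: le_trans fw; apply: f_mono; [exact: P01 | exact/in01n_pad/in01_inv_succ |].
    exact: tle_self_pad.
  move=> /existsNP[j /not_implyP[ju /negP]]; rewrite -ltNge => cj.
  right; rewrite -bigcup_seq_cond; exists j; first by rewrite /= mem_index_enum.
  by rewrite /E /= in_itv /= andbT.
have mF : measurable [set w | f (P w) <= a] := measurable_le_comp a f_pvalue.1.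
have mU : measurable (\big[setU/set0]_(j < n | j \notin u) E j).
  exact: bigsetU_measurable.
apply: le_trans (le_measure _ _ _ sub) _; rewrite ?inE.
- exact: measurable_le_comp a (measurable_padseq f_pvalue u k).
- exact: measurableU.
apply: le_trans (measureU2 _ mF mU) _.
by apply: leeD; [exact: f_valid | exact: le_measure_bigsetU].
Qed.

Lemma padseq_valid (u : {set 'I_n}) k : #|u| = (n - r + 1)%N ->
  valid_for mu P (null_u Theta0 u) (padseq f u ^~ k).
Proof.
move=> card_u theta theta_u a a01; set c : R := k.+1%:R^-1.
apply/lee_addgt0Pr => e e_gt0; pose eps := e / n.+1%:R.
have eps_gt0 : 0 < eps by rewrite divr_gt0 // ltr0n.
have c_gt0 : 0 < c by rewrite invr_gt0 ltr0n.
have [t t_alt] := exists_alt_concentrated c_gt0 eps_gt0.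
pose theta' : forall i, Theta i := fun i => if i \in u then theta i else t i.
have theta'_u : null_u Theta0 u theta' by move=> j ju; rewrite /theta' ju; exact: theta_u.
pose D := [set p : n.-tuple R | padseq f u p k <= a].
have mD : measurable D.
  rewrite -[X in measurable X]setTI.
  exact: measurable_fun_le (measurable_padseq f_pvalue u k) (measurable_cst a).
have D_u : set_depends_only_on u D by move=> p q pq; rewrite /D /= /padseq (pad_eq _ pq).
change (mu theta (P @^-1` D) <= a%:E + e%:E)%E.
rewrite (law_Pu u theta theta') //; last by move=> j ju; rewrite /theta' ju.
apply: le_trans (mu_padseq_le u k (null_rn_of_null_u card_u theta'_u) a01) _.
apply: leeD => //; apply: (@le_trans _ _ (\sum_(j < n | j \notin u) eps%:E)%E).
  apply: lee_sum => j ju; rewrite margP /theta' ?(negbTE ju) //.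
  exact/ltW/(t_alt j).2.
rewrite sumEFin lee_fin sumr_const -[e](divfK (_ : n.+1%:R != 0)) ?pnatr_eq0 //.
rewrite -/eps mulr_natr; apply: ler_wpMn2l; first exact: ltW.
by rewrite (leq_trans (max_card _)) // card_ord.
Qed.

Lemma gpad_valid (u : {set 'I_n}) : #|u| = (n - r + 1)%N ->
  valid_for mu P (null_u Theta0 u) (gpad f u).
Proof.
move=> card_u theta theta_u a /andP[a_ge0 a_le1].
have mG b : measurable [set w | gpad f u (P w) <= b].
  exact: measurable_le_comp b (measurable_gpad f_pvalue f_mono u).
have [->|a_neq1] := eqVneq a 1; first exact: probability_le1.
apply/lee_addgt0Pr => e e_gt0; pose a' := Num.min (a + e) 1.
have a'01 : in01 a'.
  by rewrite /in01 le_min ler01 addr_ge0 ?(ltW e_gt0) //= ge_min lexx orbT.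
have a_lt_a' : a < a' by rewrite lt_min ltrDl e_gt0 lt_neqAle a_neq1 a_le1.
pose F k := [set w | padseq f u (P w) k <= a'].
have mF k : measurable (F k).
  exact: measurable_le_comp a' (measurable_padseq f_pvalue u k).
have sub : [set w | gpad f u (P w) <= a] `<=` \bigcup_k F k.
  move=> w /= gw; have [k lt_k] := gpad_lt (le_lt_trans gw a_lt_a').
  by exists k => //; exact: ltW.
apply: le_trans (le_measure _ _ _ sub) _; rewrite ?inE //.
  exact: bigcup_measurable.
apply: (@le_trans _ _ a'%:E); last by rewrite lee_fin ge_min lexx.
apply: le_measure_nondecreasing_bigcup => // [i j ij|k].
  by rewrite subsetEset => w /=; apply: le_trans; exact: padseq_nonincreasing.
exact: padseq_valid.
Qed.

Definition fstar (p : n.-tuple R) : R :=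
  \big[Num.max/0]_(u : {set 'I_n} | #|u| == (n - r + 1)%N) gpad f u p.

Lemma measurable_fstar : measurable_fun [set: n.-tuple R] fstar.
Proof.
rewrite /fstar; elim: (index_enum _) => [|u s IH].
  by under eq_fun do rewrite big_nil; exact: measurable_cst.
under eq_fun do rewrite big_cons.
case: (#|u| == (n - r + 1)%N) => //.
by apply: measurable_maxr => //; exact: measurable_gpad.
Qed.

Lemma gpad_le_fstar (u : {set 'I_n}) p : #|u| = (n - r + 1)%N -> gpad f u p <= fstar p.
Proof. by move=> card_u; rewrite /fstar (le_bigmax_cond _ _ (_ : #|u| == _)) // card_u. Qed.

Lemma fstar_le_f p : in01n p -> (forall j, 0 < tnth p j) -> fstar p <= f p.
Proof.
move=> p01 p_gt0; apply: bigmax_le; first by case/andP: (f_pvalue.2 p p01).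
by move=> u _; exact: gpad_le_f.
Qed.

Lemma fstar_GBHPC : GBHPC Theta0 mu P r fstar.
Proof.
exists (gpad f); split => // u card_u; split.
- exact: gpad_depends.
- by split; [exact: measurable_gpad | move=> p _; exact: gpad_in01].
- exact: gpad_monotone.
- exact: gpad_valid.
Qed.

Lemma fstar_valid : valid_for mu P (null_rn Theta0 r) fstar.
Proof.
move=> theta /exists_null_u_of_null_rn[u card_u theta_u] a a01.
apply: le_trans (gpad_valid card_u theta_u a01).
apply: le_measure; rewrite ?inE.
- exact: measurable_le_comp a measurable_fstar.
- exact: measurable_le_comp a (measurable_gpad f_pvalue f_mono u).
by move=> w /=; apply: le_trans; exact: gpad_le_fstar.
Qed.

Lemma fstar_more_powerful theta a :
  (mu theta [set w | (f (P w) <= a)%R] <= mu theta [set w | (fstar (P w) <= a)%R])%E.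
Proof.
pose Z j := Pi P j @^-1` [set 0].
have mZ j : measurable (Z j) by exact: measurable_Pi_preimage.
have mS : measurable [set w | fstar (P w) <= a] := measurable_le_comp a measurable_fstar.
have sub : [set w | f (P w) <= a] `<=`
           [set w | fstar (P w) <= a] `|` \big[setU/set0]_(j < n) Z j.
  move=> w /= fw; have [p_gt0|] := pselect (forall j, 0 < tnth (P w) j).
    by left; apply: le_trans fw; exact: fstar_le_f.
  move=> /existsNP[j Pj_le0]; right; rewrite -bigcup_seq; exists j => //=.
    by rewrite mem_index_enum.
  by rewrite /Z /Pi /=; case/andP: (P01 w j); rewrite le_eqVlt => /orP[/eqP <-|/Pj_le0].
apply: le_trans (le_measure _ _ _ sub) _; rewrite ?inE.
- exact: measurable_le_comp a f_pvalue.1.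
- by apply: measurableU => //; exact: bigsetU_measurable.
apply: le_trans (measureU2 _ mS (bigsetU_measurable _ _)) _ => //.
have Z_null : (mu theta (\big[setU/set0]_(j < n) Z j) <= 0)%E.
  apply: le_trans (le_measure_bigsetU (mu theta) _ (fun j _ => mZ j)) _.
  by rewrite big1 // => j _; exact: mu_Pi_eq0.
by rewrite -[leRHS]adde0 leeD2l.
Qed.

End Model.

Theorem theorem2 (R : realType) (d : measure_display) (Omega : measurableType d)
  (n r : nat) (Theta : 'I_n -> Type) (Theta0 : forall i, set (Theta i))
  (mu : (forall i, Theta i) -> probability Omega R)
  (P : Omega -> n.-tuple R)
  (marg : forall i : 'I_n, Theta i -> probability R R)
  (f : n.-tuple R -> R) :
  (1 <= r <= n)%N ->
  (* the p-values: measurable, with values in [0,1] *)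
  measurable_fun [set: Omega] P ->
  (forall w, in01n (P w)) ->
  (* P_i has distribution Pr_{theta_i} = marg i (theta i) *)
  (forall theta (i : 'I_n) (A : set R), measurable A ->
     mu theta (Pi P i @^-1` A) = marg i (theta i) A) ->
  (* the joint law of P_u depends on theta only through theta_u *)
  (forall (u : {set 'I_n}) (theta theta' : forall i, Theta i),
     (forall j, j \in u -> theta j = theta' j) ->
     forall D : set (n.-tuple R), measurable D -> set_depends_only_on u D ->
     mu theta (P @^-1` D) = mu theta' (P @^-1` D)) ->
  (* each P_i is a valid p-value *)
  (forall (i : 'I_n) (alpha : R), in01 alpha ->
     (ereal_sup [set marg i t `]-oo, alpha]%classic | t in Theta0 i] <= alpha%:E)%E) ->
  (* independent or PRDS *)
  ((forall theta, independent_under mu P theta) \/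
   (forall theta, PRDS_under mu P theta)) ->
  (* condition (i) *)
  (forall (alpha : R), 0 < alpha -> forall i : 'I_n,
     ereal_sup [set marg i t `]-oo, alpha]%classic | t in ~` Theta0 i] = 1%E) ->
  (* condition (ii) *)
  (forall (i : 'I_n) (t : Theta i), ~ Theta0 i t -> marg i t [set 0] = 0%E) ->
  (* f(P) is a valid monotone p-value for H_0^{r/n} *)
  pvalue_fun f -> monotone01 f -> valid_for mu P (null_rn Theta0 r) f ->
  exists fstar : n.-tuple R -> R,
    [/\ GBHPC Theta0 mu P r fstar,
        valid_for mu P (null_rn Theta0 r) fstar &
        forall theta, alt_rn Theta0 r theta -> forall alpha : R, in01 alpha ->
          (mu theta [set w | (f (P w) <= alpha)%R] <=
           mu theta [set w | (fstar (P w) <= alpha)%R])%E].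
Proof.
move=> r_range mP P01 margP law_Pu Pi_valid _ alt_near0 alt_no_atom0 f_pvalue f_mono f_valid.
exists (fstar r f); split.
- exact: fstar_GBHPC r_range mP P01 margP law_Pu alt_near0 f_pvalue f_mono f_valid.
- exact: fstar_valid r_range mP P01 margP law_Pu alt_near0 f_pvalue f_mono f_valid.
- move=> theta _ alpha _.
  exact (fstar_more_powerful r mP P01 margP Pi_valid alt_no_atom0 f_pvalue f_mono theta alpha).
Qed.
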